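(* Consider the adaptive LP decoding algorithm described in the context, run on a binary linear code with parity-check matrix $H$ and log-likelihood vector $\underline\gamma\in\mathbb{R}^n$ with $\gamma_i\neq 0$ for all $i$. If at some iteration no cut is found at the current solution $\underline x$ (Step 3 finds no violated parity-check constraint), then $\underline x$ is an optimal solution of the LP decoding problem $\min\{\underline\gamma^T\underline x:\underline x\in\mathscr P\}$, where $\mathscr P$ is the fundamental polytope.
   Context: Let $H$ be an $m\times n$ binary parity-check matrix; for row $j$, $N(j)=\{i: H_{ji}=1\}$. The fundamental polytope $\mathscr P$ is the set of $\underline x\in\mathbb R^n$ with $0\le x_i\le 1$ for all $i$ and, for each $j=1,\dots,m$ and each odd-sized $V\subseteq N(j)$, $\sum_{i\in V}x_i-\sum_{i\in N(j)\setminus V}x_i\le |V|-1$ (parity-check constraints). A constraint is a cut at a point if it is violated there. Adaptive LP decoding: Step 1: form an initial LP minimizing $\underline\gamma^T\underline x$ subject to, for each $i$, the single constraint $0\le x_i$ if $\gamma_i>0$, or $x_i\le 1$ if $\gamma_i<0$. Step 2: solve the current LP, obtaining an optimal solution $\underline x$. Step 3: find all parity-check constraints (over all check nodes $j$ and odd $V\subseteq N(j)$) that are cuts at $\underline x$. Step 4: if any cuts were found, add them to the current LP's constraints and return to Step 2; otherwise output $\underline x$ and stop. *)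

From mathcomp Require Import all_boot all_order all_algebra.
Set Implicit Arguments. Unset Strict Implicit. Unset Printing Implicit Defensive.
Import Order.TTheory GRing.Theory Num.Theory.
Local Open Scope ring_scope.

Section LPDecoding.
Variables (R : realFieldType) (m n : nat).
(* binary parity-check matrix: H j i = true iff H_{ji} = 1 *)
Variable H : 'M[bool]_(m, n).

Definition Nset (j : 'I_m) : {set 'I_n} := [set i | H j i].

Definition is_pc (j : 'I_m) (V : {set 'I_n}) : bool :=
  (V \subset Nset j) && odd #|V|.

Definition pc_holds (x : 'I_n -> R) (j : 'I_m) (V : {set 'I_n}) : bool :=
  \sum_(i in V) x i - \sum_(i in Nset j :\: V) x i <= #|V|%:R - 1.

Definition is_cut (x : 'I_n -> R) (j : 'I_m) (V : {set 'I_n}) : bool :=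
  is_pc j V && ~~ pc_holds x j V.

Definition in_polytope (x : 'I_n -> R) : Prop :=
  (forall i, 0 <= x i <= 1) /\
  (forall j V, is_pc j V -> pc_holds x j V).

Definition obj (gamma x : 'I_n -> R) : R := \sum_i gamma i * x i.

(* Step 1 constraints *)
Definition init_ok (gamma x : 'I_n -> R) : Prop :=
  forall i, (0 < gamma i -> 0 <= x i) /\ (gamma i < 0 -> x i <= 1).

(* Feasible set of the LP solved at iteration k of a run whose successive
   optimal solutions are xs 0, xs 1, ...: the initial constraints plus all
   cuts found at the solutions of iterations 0..k-1. *)
Definition adaptive_feasible (gamma : 'I_n -> R) (xs : nat -> 'I_n -> R)
  (k : nat) (y : 'I_n -> R) : Prop :=
  init_ok gamma y /\
  (forall l j V, (l < k)%N -> is_cut (xs l) j V -> pc_holds y j V).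

Definition adaptive_optimal (gamma : 'I_n -> R) (xs : nat -> 'I_n -> R)
  (k : nat) (y : 'I_n -> R) : Prop :=
  adaptive_feasible gamma xs k y /\
  (forall z, adaptive_feasible gamma xs k z -> obj gamma y <= obj gamma z).

End LPDecoding.

(* Every constraint of the adaptive LP is either an initial bound x_i >= 0 or
   x_i <= 1, or a parity-check inequality, so the adaptive LP is a relaxation
   of LP decoding over the fundamental polytope.  If its optimum x admits no
   cut, x satisfies every parity-check inequality, and it remains to see that
   x lies in the unit cube.  Clamping x coordinatewise to [0, 1] preserves all
   parity-check inequalities, so the clamped point is feasible; under the
   initial bounds clamping never increases the cost, and it strictly
   decreases it at any coordinate outside [0, 1] because gamma_i <> 0.  Hence
   x is already in the cube, i.e. in the polytope, and optimal over it. *)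
From mathcomp Require Import all_boot all_order all_algebra.
From mathcomp Require Import lra.
Import Order.TTheory GRing.Theory Num.Theory.
Local Open Scope ring_scope.
Set Implicit Arguments. Unset Strict Implicit.

Lemma sum_le_card_sub1 (R : realDomainType) (T : finType) (A : {set T})
    (F : T -> R) k :
  k \in A -> F k <= 0 -> {in A, forall i, F i <= 1} ->
  \sum_(i in A) F i <= #|A|%:R - 1.
Proof.
move=> kA Fk_le0 F_le1.
rewrite (bigD1 k) //= -sumr_const [in leRHS](bigD1 k) //=.
have : \sum_(i in A | i != k) F i <= \sum_(i in A | i != k) (1 : R).
  by apply: ler_sum => i /andP[iA _]; exact: F_le1.
lra.
Qed.

Section Clamp.
Variable R : realDomainType.

Definition clamp01 (a : R) : R := Num.max 0 (Num.min 1 a).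

Lemma clamp01_ge0 a : 0 <= clamp01 a.
Proof. by rewrite le_max lexx. Qed.

Lemma clamp01_le1 a : clamp01 a <= 1.
Proof. by rewrite ge_max ler01 ge_min lexx. Qed.

Lemma clamp01_lt0 a : a < 0 -> clamp01 a = 0.
Proof. by move=> a_lt0; apply/max_idPl; rewrite ge_min (ltW a_lt0) orbT. Qed.

Lemma clamp01_gt1 a : 1 < a -> clamp01 a = 1.
Proof. by move=> a_gt1; rewrite /clamp01 (min_idPl (ltW a_gt1)) (max_idPr ler01). Qed.

Lemma clamp01_le a : 0 <= a -> clamp01 a <= a.
Proof. by move=> a_ge0; rewrite ge_max a_ge0 ge_min lexx orbT. Qed.

Lemma clamp01_ge a : a <= 1 -> a <= clamp01 a.
Proof. by move=> a_le1; rewrite le_max le_min a_le1 lexx orbT. Qed.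

Lemma mul_clamp01_le g a :
  (0 < g -> 0 <= a) -> (g < 0 -> a <= 1) -> g * clamp01 a <= g * a.
Proof.
move=> a_ge0 a_le1; case: (ltrgt0P g) => [g_gt0|g_lt0|->].
- by rewrite ler_pM2l // clamp01_le // a_ge0.
- by rewrite ler_nM2l // clamp01_ge // a_le1.
- by rewrite !mul0r.
Qed.

Lemma mul_clamp01_lt g a : g != 0 ->
  (0 < g -> 0 <= a) -> (g < 0 -> a <= 1) -> ~~ (0 <= a <= 1) ->
  g * clamp01 a < g * a.
Proof.
move=> g_neq0 a_ge0 a_le1; case: (ltrgt0P g) g_neq0 => [g_gt0|g_lt0|->] // _.
- rewrite a_ge0 //= -ltNge => a_gt1.
  by rewrite ltr_pM2l // clamp01_gt1.
- rewrite a_le1 // andbT -ltNge => a_lt0.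
  by rewrite ltr_nM2l // clamp01_lt0.
Qed.

End Clamp.
Arguments clamp01 {R} a.

Section Polytope.
Variables (R : realFieldType) (m n : nat) (H : 'M[bool]_(m, n)).
Implicit Types (x y : 'I_n -> R) (j : 'I_m) (V : {set 'I_n}).

Definition in_unit_cube x := forall i, 0 <= x i <= 1.

Lemma pc_holds_cube_zero y j V k :
  in_unit_cube y -> k \in V -> y k <= 0 -> pc_holds H y j V.
Proof.
move=> y01 kV yk_le0; rewrite /pc_holds.
have sumV := sum_le_card_sub1 kV yk_le0 (fun i _ => (andP (y01 i)).2).
have : 0 <= \sum_(i in Nset H j :\: V) y i.
  by apply: sumr_ge0 => i _; case/andP: (y01 i).
lra.
Qed.

Lemma pc_holds_cube_one y j V k :
  in_unit_cube y -> k \in Nset H j :\: V -> 1 <= y k -> pc_holds H y j V.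
Proof.
move=> y01 kNV yk_ge1; rewrite /pc_holds.
have : \sum_(i in V) y i <= \sum_(i in V) (1 : R).
  by apply: ler_sum => i _; case/andP: (y01 i).
rewrite sumr_const.
have : 0 <= \sum_(i in Nset H j :\: V | i != k) y i.
  by apply: sumr_ge0 => i _; case/andP: (y01 i).
rewrite [in X in _ - X](bigD1 k) //=; lra.
Qed.

Lemma pc_holds_le x y j V : pc_holds H x j V ->
  {in V, forall i, y i <= x i} -> {in Nset H j :\: V, forall i, x i <= y i} ->
  pc_holds H y j V.
Proof.
rewrite /pc_holds => x_pc le_V le_NV.
have : \sum_(i in V) y i <= \sum_(i in V) x i by exact: ler_sum.
have : \sum_(i in Nset H j :\: V) x i <= \sum_(i in Nset H j :\: V) y i.
  exact: ler_sum.
lra.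
Qed.

Lemma pc_holds_clamp01 x j V : pc_holds H x j V -> pc_holds H (clamp01 \o x) j V.
Proof.
move=> x_pc; have cube : in_unit_cube (clamp01 \o x).
  by move=> i; rewrite clamp01_ge0 clamp01_le1.
case: (pickP (fun k => (k \in V) && (x k < 0))) => [k /andP[kV xk_lt0]|noV].
  by apply: (pc_holds_cube_zero _ cube kV); rewrite /= clamp01_lt0.
case: (pickP (fun k => (k \in Nset H j :\: V) && (1 < x k))) =>
  [k /andP[kNV xk_gt1]|noNV].
  by apply: (pc_holds_cube_one cube kNV); rewrite /= clamp01_gt1.
apply: (pc_holds_le x_pc) => i iA /=.
  by apply: clamp01_le; move: (noV i); rewrite iA /= => /negbT; rewrite -leNgt.
by apply: clamp01_ge; move: (noNV i); rewrite iA /= => /negbT; rewrite -leNgt.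
Qed.

Lemma clamp01_in_polytope x :
  (forall j V, is_pc H j V -> pc_holds H x j V) ->
  in_polytope H (clamp01 \o x).
Proof.
move=> x_pc; split=> [i|j V jV]; first by rewrite clamp01_ge0 clamp01_le1.
exact/pc_holds_clamp01/x_pc.
Qed.

Lemma pc_holds_of_no_cut x :
  (forall j V, ~~ is_cut H x j V) -> forall j V, is_pc H j V -> pc_holds H x j V.
Proof. by move=> nocut j V jV; move: (nocut j V); rewrite /is_cut jV negbK. Qed.

Lemma in_polytope_adaptive_feasible gamma xs k y :
  in_polytope H y -> adaptive_feasible H gamma xs k y.
Proof.
move=> [y01 y_pc]; split=> [i|l j V _ /andP[jV _]]; last exact: y_pc.
by case/andP: (y01 i).
Qed.

Lemma in_unit_cube_of_clamp01_obj gamma x :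
  (forall i, gamma i != 0) -> init_ok gamma x ->
  obj gamma x <= obj gamma (clamp01 \o x) -> in_unit_cube x.
Proof.
move=> gamma_neq0 x_init obj_le i; apply/negPn/negP => x_out.
have [x_ge0 x_le1] := x_init i.
suff : obj gamma (clamp01 \o x) < obj gamma x by rewrite ltNge obj_le.
rewrite /obj (bigD1 i) //= [ltRHS](bigD1 i) //=.
apply: ltr_leD; first exact: mul_clamp01_lt.
by apply: ler_sum => k _; have [? ?] := x_init k; exact: mul_clamp01_le.
Qed.

End Polytope.

Theorem lemma1 (R : realFieldType) (m n : nat) (H : 'M[bool]_(m, n))
  (gamma : 'I_n -> R) (hgamma : forall i, gamma i != 0)
  (xs : nat -> 'I_n -> R) (t : nat)
  (hopt : forall k, (k <= t)%N -> adaptive_optimal H gamma xs k (xs k))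
  (hcuts : forall l, (l < t)%N -> exists j V, is_cut H (xs l) j V)
  (hnocut : forall j V, ~~ is_cut H (xs t) j V) :
  in_polytope H (xs t) /\
  (forall y, in_polytope H y -> obj gamma (xs t) <= obj gamma y).
Proof.
have [[x_init _] x_min] := hopt t (leqnn t).
have x_pc := pc_holds_of_no_cut hnocut.
have x_cube : in_unit_cube (xs t).
  apply: in_unit_cube_of_clamp01_obj hgamma x_init _.
  exact/x_min/in_polytope_adaptive_feasible/clamp01_in_polytope.
split=> [|y y_poly]; first by [].
exact/x_min/in_polytope_adaptive_feasible.
Qed.
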